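(* Take $R=\mathbb{F}_2$, $F=\hat{\mathbb{G}}_a$, $G=\hat{\mathbb{G}}_m$ in the tangent spectral sequence $H^*(\hat{\mathbb{G}}_a;\hat{\mathbb{G}}_a)(R)\Rightarrow H^*(\hat{\mathbb{G}}_a;\hat{\mathbb{G}}_m)(R)$, let $i\neq j$ and let $c$ be a coefficient. Then \[ d_{2^i+2^j}(c\,a_ia_j) = c^2\,(a_i^2a_{j+1}-a_{i+1}a_j^2). \]
   Context: $\hat{\mathbb{G}}_a$ is the formal group law $x+y$ and $\hat{\mathbb{G}}_m$ the formal group law $x+y+xy$ (equivalently $(1+x)(1+y)$). Lubin–Tate cochains $A^n(F;G)(R)$ are power series in $n$ variables with zero constant term with the alternating coboundary built from the group laws; $H^*(F;G)(R)$ is the cohomology. The tangent spectral sequence is the spectral sequence of the filtration of these cochains by leading total degree; its $E_1$-term is $H^*(\hat{\mathbb{G}}_a;\hat{\mathbb{G}}_a)(R)$, graded by the homogeneous degree of representing polynomials, and it converges to $H^*(\hat{\mathbb{G}}_a;\hat{\mathbb{G}}_m)(R)$; $d_r$ is the differential on the $E_r$-page. Over $\mathbb{F}_2$, $H^*(\hat{\mathbb{G}}_a;\hat{\mathbb{G}}_a)(\mathbb{F}_2)$ is the polynomial algebra on classes $a_i\in H^1$ represented by $x^{2^i}$; the product $a_ia_j\in H^2$ is represented by $x^{2^i}y^{2^j}$, and similarly for cubic monomials in three variables. *)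

From HB Require Import structures.
From mathcomp Require Import all_boot all_algebra.
From mathcomp Require Import mpoly.

Set Implicit Arguments.
Unset Strict Implicit.
Unset Printing Implicit Defensive.

Import GRing.Theory.
Local Open Scope ring_scope.

Section LubinTate.
Variable R : comNzRingType.

Definition PS (n : nat) := 'X_{1..n} -> R.

Definition trunc n (d : nat) (f : PS n) : {mpoly R[n]} :=
  \sum_(m : 'X_{1..n < d.+1}) f m *: 'X_[bmnm m].

Definition ps_of n (p : {mpoly R[n]}) : PS n := fun m => p@_m.
Definition ps_zero n : PS n := fun _ => 0.
Definition ps_add n (f g : PS n) : PS n := fun m => f m + g m.
(* product of power series: the degree-d coefficients only depend on the
   truncations to degree d *)
Definition ps_mul n (f g : PS n) : PS n :=
  fun m => (trunc (mdeg m) f * trunc (mdeg m) g)@_m.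

(* The formal group law G_m : x +_G y = x + y + xy, and its formal inverse
   [-_G] u = (1+u)^{-1} - 1 = sum_{k>=1} (-u)^k (for u with zero constant
   term; in degree d only k <= d contribute). *)
Definition gm_add n (f g : PS n) : PS n := ps_add (ps_add f g) (ps_mul f g).
Definition gm_opp n (f : PS n) : PS n :=
  fun m => (\sum_(1 <= k < (mdeg m).+1) (- trunc (mdeg m) f) ^+ k)@_m.
Definition gm_sub n (f g : PS n) : PS n := gm_add f (gm_opp g).

Definition ps_subst n k (lq : n.-tuple {mpoly R[k]}) (f : PS n) : PS k :=
  fun m => ((trunc (mdeg m) f) \mPo lq)@_m.

(* k-th face for F = G_a (0-indexed variables x_0..x_n):
   k = 0      : f(x_1, ..., x_n)
   1<=k<=n    : f(x_0, ..., x_{k-1} + x_k, ..., x_n)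
   k = n+1    : f(x_0, ..., x_{n-1}) *)
Definition face_var n (k : nat) (i : 'I_n) : {mpoly R[n.+1]} :=
  if (i.+1 < k)%N then 'X_(inord i)
  else if i.+1 == k then 'X_(inord i) + 'X_(inord i.+1)
  else 'X_(inord i.+1).

Definition face n (k : nat) : n.-tuple {mpoly R[n.+1]} :=
  [tuple face_var k i | i < n].

(* Lubin--Tate coboundary A^n(G_a;G_m) -> A^{n+1}(G_a;G_m):
   delta f = f o d_0  -_G  f o d_1  +_G  f o d_2 ... (alternating in G_m). *)
Definition delta n (f : PS n) : PS n.+1 :=
  foldl (fun acc k => if odd k then gm_sub acc (ps_subst (face n k) f)
                      else gm_add acc (ps_subst (face n k) f))
        (@ps_zero n.+1) (iota 0 n.+2).

Definition cochain n (f : PS n) : Prop := f 0%MM = 0.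

Definition inF n (p : nat) (f : PS n) : Prop :=
  forall m : 'X_{1..n}, (mdeg m < p)%N -> f m = 0.

(* Spectral sequence of the filtered complex:
   Z_r^p = { x in F^p A^n | delta x in F^{p+r} },
   E_r^p = Z_r^p / (Z_{r-1}^{p+1} + delta Z_{r-1}^{p-r+1}),
   d_r [x] = [delta x]. *)
Definition Zr n (r p : nat) (f : PS n) : Prop :=
  cochain f /\ inF p f /\ inF (p + r) (delta f).

(* equality of the classes of x, y (both in Z_r^p A^{n+1}) in E_r^p *)
Definition Eeq n (r p : nat) (x y : PS n.+1) : Prop :=
  exists (a : PS n.+1) (b : PS n),
    Zr r.-1 p.+1 a /\ Zr r.-1 (p.+1 - r) b /\
    forall m, gm_sub x y m = gm_add a (delta b) m.

Definition agree_upto n (d : nat) (f g : PS n) : Prop :=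
  forall m : 'X_{1..n}, (mdeg m <= d)%N -> f m = g m.

End LubinTate.

(* For a polynomial cochain [P] with no terms of degree < q, the G_m-coboundary
   of [P] agrees below degree [3 q] with [delta_poly P], computed with the
   G_m-inverse truncated after its quadratic term, and [1 + delta_poly P] is the
   alternating product of the [1 + V_k], [V_k = P o d_k].  Hence [delta P] agrees
   with [W] below degree [3 q] as soon as [(1 + W) * prod_(k odd) (1 + V_k)] and
   [prod_(k even) (1 + V_k)] do.
   In characteristic 2 the faces of [P = c x^(2^i) y^(2^j)] are computed by the
   Frobenius; they satisfy the additive cocycle relation
   [V_0 - V_1 + V_2 - V_3 = 0], and [W = V_0 V_2 - V_1 V_3] is exactly
   [c^2 (x^(2^i) y^(2^i) z^(2^(j+1)) - x^(2^(i+1)) y^(2^j) z^(2^j))], which gives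
   [d_p [c a_i a_j] = [W]] for [p = 2^i + 2^j].  [W] is in turn an additive
   cocycle of order [2 p], so its G_m-coboundary vanishes below [4 p]. *)

From HB Require Import structures.
From mathcomp Require Import all_boot all_algebra.
From mathcomp Require Import mpoly.
From mathcomp Require Import ring zify.

Set Implicit Arguments.
Unset Strict Implicit.
Unset Printing Implicit Defensive.

Import GRing.Theory.
Local Open Scope ring_scope.

Lemma big_nat_widen0 (M : nmodType) a b c (F : nat -> M) :
  (a <= b <= c)%N -> (forall k, (b <= k < c)%N -> F k = 0) ->
  \sum_(a <= k < c) F k = \sum_(a <= k < b) F k.
Proof.
move=> /andP[hab hbc] hF; rewrite (big_cat_nat hab hbc) /=.
by rewrite [X in _ + X]big_nat_cond [X in _ + X]big1 ?addr0 // => k /andP[/hF].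
Qed.

Section VanishingOrder.
Variable R : comNzRingType.

Definition vanishes_below n (N : nat) (P : {mpoly R[n]}) :=
  forall m : 'X_{1..n}, (mdeg m < N)%N -> P@_m = 0.

Section Closure.
Variable n : nat.
Implicit Types (P Q : {mpoly R[n]}) (N : nat).

Lemma vanishes_belowW N N' P : (N' <= N)%N -> vanishes_below N P -> vanishes_below N' P.
Proof. by move=> le h m hm; apply: h; apply: leq_trans hm le. Qed.

Lemma vanishes_below0 N : vanishes_below N (0 : {mpoly R[n]}).
Proof. by move=> m _; rewrite mcoeff0. Qed.

Lemma vanishes_belowD N P Q :
  vanishes_below N P -> vanishes_below N Q -> vanishes_below N (P + Q).
Proof. by move=> hP hQ m hm; rewrite mcoeffD hP // hQ // addr0. Qed.

Lemma vanishes_belowN N P : vanishes_below N P -> vanishes_below N (- P).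
Proof. by move=> hP m hm; rewrite mcoeffN hP // oppr0. Qed.

Lemma vanishes_belowB N P Q :
  vanishes_below N P -> vanishes_below N Q -> vanishes_below N (P - Q).
Proof. by move=> hP hQ; apply: vanishes_belowD => //; apply: vanishes_belowN. Qed.

Lemma vanishes_belowZ N c P : vanishes_below N P -> vanishes_below N (c *: P).
Proof. by move=> hP m hm; rewrite mcoeffZ hP // mulr0. Qed.

Lemma vanishes_belowM N N' P Q :
  vanishes_below N P -> vanishes_below N' Q -> vanishes_below (N + N') (P * Q).
Proof.
move=> hP hQ m hm; rewrite mcoeffM big1 // => k /eqP em.
have : (mdeg k.1 + mdeg k.2 < N + N')%N by rewrite -mdegD -em.
have [lt1|ge1] := ltnP (mdeg k.1) N; first by rewrite hP // mul0r.
have [lt2|ge2] := ltnP (mdeg k.2) N'; first by rewrite hQ // mulr0.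
by rewrite ltnNge leq_add.
Qed.

Lemma vanishes_belowX N k P : vanishes_below N P -> vanishes_below (k * N) (P ^+ k).
Proof.
move=> hP; elim: k => [|k ih]; first by [].
by rewrite exprS mulSn; apply: vanishes_belowM.
Qed.

Lemma vanishes_belowXU (i : 'I_n) : vanishes_below 1 ('X_i : {mpoly R[n]}).
Proof.
move=> m; rewrite ltnS leqn0 mdeg_eq0 => /eqP ->.
by rewrite mcoeffX; case: eqP => // /(congr1 mdeg); rewrite mdeg1 mdeg0.
Qed.

Lemma vanishes_belowXUn (i : 'I_n) e : vanishes_below e ('X_i ^+ e : {mpoly R[n]}).
Proof. by rewrite -[e in vanishes_below e]muln1; apply/vanishes_belowX/vanishes_belowXU. Qed.

Lemma eq_mcoeff_below N P Q m :
  vanishes_below N (P - Q) -> (mdeg m < N)%N -> P@_m = Q@_m.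
Proof. by move=> h hm; apply/eqP; rewrite -subr_eq0 -mcoeffB h. Qed.

Lemma vanishes_belowXB N k P Q :
  vanishes_below N (P - Q) -> vanishes_below N (P ^+ k - Q ^+ k).
Proof.
move=> h; elim: k => [|k ih]; first by rewrite subrr; apply: vanishes_below0.
have -> : P ^+ k.+1 - Q ^+ k.+1 = (P - Q) * P ^+ k + Q * (P ^+ k - Q ^+ k).
  by rewrite !exprS; ring.
by apply: vanishes_belowD; [rewrite -[N]addn0 | rewrite -[N]add0n];
  apply: vanishes_belowM.
Qed.

Lemma vanishes_below_divr N P Q :
  vanishes_below 1 (Q - 1) -> vanishes_below N (P * Q) -> vanishes_below N P.
Proof.
move=> hQ; elim: N => [|N ih] hPQ; first by [].
have hP : vanishes_below N P by apply/ih/(vanishes_belowW (leqnSn N)).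
have -> : P = P * Q - P * (Q - 1) by ring.
by apply: vanishes_belowB => //; rewrite -addn1; apply: vanishes_belowM.
Qed.

Variables (I : Type) (A : pred I) (F : I -> {mpoly R[n]}).

Lemma vanishes_below_prod1 (s : seq I) N : (forall i, A i -> vanishes_below N (F i)) ->
  vanishes_below N (\prod_(i <- s | A i) (1 + F i) - 1).
Proof.
move=> hF; elim: s => [|x s' ih]; first by rewrite big_nil subrr; apply: vanishes_below0.
rewrite big_cons; case hx: (A x) => //.
have -> : (1 + F x) * \prod_(i <- s' | A i) (1 + F i) - 1
    = F x * \prod_(i <- s' | A i) (1 + F i) + (\prod_(i <- s' | A i) (1 + F i) - 1).
  by ring.
by apply: vanishes_belowD => //; rewrite -[N]addn0; apply: vanishes_belowM => //; apply: hF.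
Qed.

Lemma vanishes_below_prod1D (s : seq I) q : (forall i, A i -> vanishes_below q (F i)) ->
  vanishes_below (q + q)
    (\prod_(i <- s | A i) (1 + F i) - 1 - \sum_(i <- s | A i) F i).
Proof.
move=> hF; elim: s => [|x s' ih].
  by rewrite !big_nil subrr sub0r oppr0; apply: vanishes_below0.
rewrite !big_cons; case hx: (A x) => //.
have -> : (1 + F x) * \prod_(i <- s' | A i) (1 + F i) - 1 - (F x + \sum_(i <- s' | A i) F i)
    = F x * (\prod_(i <- s' | A i) (1 + F i) - 1)
      + (\prod_(i <- s' | A i) (1 + F i) - 1 - \sum_(i <- s' | A i) F i).
  by ring.
by apply: vanishes_belowD => //; apply: vanishes_belowM; [apply: hF | apply: vanishes_below_prod1].
Qed.

End Closure.

Lemma vanishes_below_comp n k N q (P : {mpoly R[n]}) (lq : n.-tuple {mpoly R[k]}) :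
  (forall i, vanishes_below q (tnth lq i)) -> vanishes_below N P ->
  vanishes_below (N * q) (P \mPo lq).
Proof.
move=> hl hP; rewrite comp_mpolyE.
elim/big_ind: _ => [|U V|m _]; [exact: vanishes_below0 | exact: vanishes_belowD |].
have [lt|ge] := ltnP (mdeg m) N.
  by rewrite hP // scale0r; apply: vanishes_below0.
apply/vanishes_belowZ/(vanishes_belowW (leq_mul ge (leqnn q))).
rewrite mdegE big_distrl /=.
elim/big_ind2: _ => [|U a V b hU hV|i _]; first by [].
  by rewrite addnC mulrC; apply: vanishes_belowM.
by apply: vanishes_belowX.
Qed.

End VanishingOrder.

Section PolynomialCoboundary.
Variable R : comNzRingType.

Lemma vanishes_below_face n k (i : 'I_n) : vanishes_below 1 (tnth (face R n k) i).
Proof.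
rewrite tnth_mktuple /face_var.
by case: ifP => _; [|case: ifP => _; [apply: vanishes_belowD|]]; apply: vanishes_belowXU.
Qed.

Lemma vanishes_below_comp_face n k N (P : {mpoly R[n]}) :
  vanishes_below N P -> vanishes_below N (P \mPo face R n k).
Proof.
by move=> hP; rewrite -[N]muln1; apply: vanishes_below_comp hP => i; apply: vanishes_below_face.
Qed.

Definition gmp_add n (U V : {mpoly R[n]}) := U + V + U * V.

(* [(1 + V)^-1 - 1] truncated after the quadratic term: exact modulo [V ^+ 3]. *)
Definition gmp_opp n (V : {mpoly R[n]}) := - V + V ^+ 2.

Definition delta_poly n (P : {mpoly R[n]}) : {mpoly R[n.+1]} :=
  foldl (fun U k => let V := P \mPo face R n k in
                    gmp_add U (if odd k then gmp_opp V else V))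
        0 (iota 0 n.+2).

Definition ga_coboundary n (P : {mpoly R[n]}) : {mpoly R[n.+1]} :=
  \sum_(k <- iota 0 n.+2) (-1) ^+ k * (P \mPo face R n k).

Lemma delta_polyE n (P : {mpoly R[n]}) :
  1 + delta_poly P = \prod_(k <- iota 0 n.+2)
    (if odd k then 1 - (P \mPo face R n k) + (P \mPo face R n k) ^+ 2
     else 1 + (P \mPo face R n k)).
Proof.
transitivity ((1 + 0) * \prod_(k <- iota 0 n.+2)
    (if odd k then 1 - (P \mPo face R n k) + (P \mPo face R n k) ^+ 2
     else 1 + (P \mPo face R n k))); last by rewrite addr0 mul1r.
rewrite /delta_poly; elim: (iota 0 n.+2) (0 : {mpoly R[n.+1]}) => [|k s ih] U /=.
  by rewrite big_nil mulr1.
rewrite ih big_cons mulrA; congr (_ * _).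
by rewrite /gmp_add /gmp_opp; case: (odd k); ring.
Qed.

Lemma delta_poly0 n : delta_poly (0 : {mpoly R[n]}) = 0.
Proof.
rewrite /delta_poly; elim: (iota 0 n.+2) => [|k s ih] //=.
have -> : gmp_add 0 (if odd k then gmp_opp (0 \mPo face R n k) else 0 \mPo face R n k)
    = 0 :> {mpoly R[n.+1]}.
  by rewrite comp_mpoly0 /gmp_add /gmp_opp; case: (odd k); ring.
exact: ih.
Qed.

Section Unique.
Variables (n q N : nat) (P : {mpoly R[n]}).
Hypotheses (q_gt0 : (0 < q)%N) (hP : vanishes_below q P) (N_le : (N <= 3 * q)%N).
Local Notation V k := (P \mPo face R n k).
Local Notation s := (iota 0 n.+2).

Lemma delta_poly_unique W :
  vanishes_below N ((1 + W) * \prod_(k <- s | odd k) (1 + V k)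
                    - \prod_(k <- s | ~~ odd k) (1 + V k)) ->
  vanishes_below N (delta_poly P - W).
Proof.
move=> hW.
have hV k : vanishes_below q (V k) by apply: vanishes_below_comp_face.
pose O := \prod_(k <- s | odd k) (1 + V k).
pose E := \prod_(k <- s | ~~ odd k) (1 + V k).
pose C := \prod_(k <- s | odd k) (1 + V k ^+ 3).
(* [(1 + V) (1 - V + V ^+ 2) = 1 + V ^+ 3], and [C] is 1 below degree [3 q]. *)
have deltaO : (1 + delta_poly P) * O = E * C.
  rewrite delta_polyE (bigID odd) mulrC mulrA -big_split mulrC.
  congr (_ * _); first by apply: eq_bigr => k /negbTE ->.
  by apply: eq_bigr => k -> /=; ring.
have hC : vanishes_below (3 * q) (C - 1).
  by apply: vanishes_below_prod1 => k _; apply: vanishes_belowX.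
have hO : vanishes_below 1 (O - 1).
  by apply: vanishes_below_prod1 => k _; apply: vanishes_belowW (hV k).
apply: (vanishes_below_divr hO).
have -> : (delta_poly P - W) * O = (1 + delta_poly P) * O - (1 + W) * O by ring.
have -> : (1 + delta_poly P) * O - (1 + W) * O = E * (C - 1) - ((1 + W) * O - E).
  by rewrite deltaO; ring.
apply: vanishes_belowB hW; apply: vanishes_belowW N_le _.
by rewrite -[(3 * q)%N]add0n; apply: vanishes_belowM.
Qed.

End Unique.

(* Below degree [2 q], [delta_poly P] reduces to its linear part [ga_coboundary P]. *)
Lemma delta_poly_cocycle n q (P : {mpoly R[n]}) :
  (0 < q)%N -> vanishes_below q P -> ga_coboundary P = 0 ->
  vanishes_below (2 * q) (delta_poly P).
Proof.
move=> q_gt0 hP hcoc; rewrite -[delta_poly P]subr0.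
have hV k : vanishes_below q (P \mPo face R n k) by apply: vanishes_below_comp_face.
apply: (@delta_poly_unique n q (2 * q) P q_gt0 hP _ 0); first by rewrite leq_mul2r orbT.
rewrite addr0 mul1r.
set s := iota 0 n.+2.
set O := \prod_(k <- s | odd k) _; set E := \prod_(k <- s | ~~ odd k) _.
pose SO := \sum_(k <- s | odd k) (P \mPo face R n k).
pose SE := \sum_(k <- s | ~~ odd k) (P \mPo face R n k).
have hsum : ga_coboundary P = SE - SO.
  rewrite /ga_coboundary (bigID odd) addrC; congr (_ + _).
    by rewrite /SO -sumrN; apply: eq_bigr => k /= hk; rewrite -signr_odd hk mulN1r.
  by apply: eq_bigr => k /= /negbTE hk; rewrite -signr_odd hk mul1r.
have -> : O - E = (O - 1 - SO) - (E - 1 - SE) - ga_coboundary P.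
  by rewrite hsum; ring.
rewrite hcoc subr0 mul2n -addnn.
by apply: vanishes_belowB; apply: vanishes_below_prod1D => k _.
Qed.

End PolynomialCoboundary.

Section PowerSeries.
Variable R : comNzRingType.

Lemma mcoeff_trunc n d (f : PS R n) m :
  (trunc d f)@_m = if (mdeg m <= d)%N then f m else 0.
Proof.
rewrite /trunc raddf_sum /=.
under eq_bigr => m' _ do rewrite mcoeffZ mcoeffX.
case: ifP => hm.
  rewrite (bigD1 (BMultinom (hm : (mdeg m < d.+1)%N))) //= eqxx mulr1.
  rewrite big1 ?addr0 // => m' hm'; case: eqP; last by rewrite mulr0.
  by move=> e; move: hm'; rewrite -(inj_eq val_inj) /= e eqxx.
rewrite big1 // => m' _; case: eqP; last by rewrite mulr0.
by move=> e; move: (bmdeg m'); rewrite e ltnS hm.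
Qed.

Lemma trunc_ps_ofB n d (P : {mpoly R[n]}) : vanishes_below d.+1 (trunc d (ps_of P) - P).
Proof. by move=> m hm; rewrite mcoeffB mcoeff_trunc -ltnS hm subrr. Qed.

Lemma agree_uptoW n d e (f g : PS R n) : (e <= d)%N -> agree_upto d f g -> agree_upto e f g.
Proof. by move=> le h m hm; apply: h; apply: leq_trans hm le. Qed.

Lemma agree_upto_trans n d (f g h : PS R n) :
  agree_upto d f g -> agree_upto d g h -> agree_upto d f h.
Proof. by move=> hfg hgh m hm; rewrite hfg // hgh. Qed.

Lemma agree_upto_ps_of n d (U W : {mpoly R[n]}) :
  vanishes_below d.+1 (U - W) -> agree_upto d (ps_of U) (ps_of W).
Proof. by move=> h m hm; apply: eq_mcoeff_below h _. Qed.

Lemma trunc_agree n d (f g : PS R n) : agree_upto d f g -> trunc d f = trunc d g.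
Proof. by move=> h; apply: eq_bigr => m _; rewrite h // -ltnS bmdeg. Qed.

Lemma agree_upto_gm_add n d (f f' g g' : PS R n) :
  agree_upto d f f' -> agree_upto d g g' -> agree_upto d (gm_add f g) (gm_add f' g').
Proof.
move=> hf hg m hm; rewrite /gm_add /ps_add /ps_mul hf // hg //.
by rewrite (trunc_agree (agree_uptoW hm hf)) (trunc_agree (agree_uptoW hm hg)).
Qed.

Lemma agree_upto_gm_opp n d (f f' : PS R n) :
  agree_upto d f f' -> agree_upto d (gm_opp f) (gm_opp f').
Proof. by move=> hf m hm; rewrite /gm_opp (trunc_agree (agree_uptoW hm hf)). Qed.

Lemma agree_upto_gm_sub n d (f f' g g' : PS R n) :
  agree_upto d f f' -> agree_upto d g g' -> agree_upto d (gm_sub f g) (gm_sub f' g').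
Proof. by move=> hf hg; apply: agree_upto_gm_add hf (agree_upto_gm_opp hg). Qed.

Lemma agree_upto_ps_subst n k d (lq : n.-tuple {mpoly R[k]}) (f f' : PS R n) :
  agree_upto d f f' -> agree_upto d (ps_subst lq f) (ps_subst lq f').
Proof. by move=> hf m hm; rewrite /ps_subst (trunc_agree (agree_uptoW hm hf)). Qed.

Lemma agree_upto_delta n d (f f' : PS R n) :
  agree_upto d f f' -> agree_upto d (delta f) (delta f').
Proof.
move=> hf; rewrite /delta.
have : agree_upto d (@ps_zero R n.+1) (@ps_zero R n.+1) by [].
generalize (@ps_zero R n.+1) at 1 3 => a; generalize (@ps_zero R n.+1) => a'.
elim: (iota 0 n.+2) a a' => [|k s ih] a a' ha /=; first exact: ha.
apply: ih; have hs := agree_upto_ps_subst (face R n k) hf.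
by case: (odd k) => /=; [exact: (agree_upto_gm_sub ha hs) | exact: (agree_upto_gm_add ha hs)].
Qed.

Lemma ps_of_mul n (P Q : {mpoly R[n]}) m : ps_mul (ps_of P) (ps_of Q) m = ps_of (P * Q) m.
Proof.
rewrite /ps_mul /ps_of; apply: (eq_mcoeff_below (N := (mdeg m).+1)) => //.
have hP := trunc_ps_ofB (d := mdeg m) P; have hQ := trunc_ps_ofB (d := mdeg m) Q.
set TP := trunc _ (ps_of P) in hP *; set TQ := trunc _ (ps_of Q) in hQ *.
have -> : TP * TQ - P * Q = (TP - P) * TQ + P * (TQ - Q) by ring.
by apply: vanishes_belowD;
  [rewrite -[X in vanishes_below X]addn0 | rewrite -[X in vanishes_below X]add0n];
  apply: vanishes_belowM.
Qed.

Lemma gm_add_ps_of n (U V : {mpoly R[n]}) m :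
  gm_add (ps_of U) (ps_of V) m = ps_of (gmp_add U V) m.
Proof. by rewrite /gm_add /ps_add ps_of_mul /ps_of !mcoeffD. Qed.

Lemma ps_of_subst n k (lq : n.-tuple {mpoly R[k]}) (P : {mpoly R[n]}) m :
  (forall i, vanishes_below 1 (tnth lq i)) ->
  ps_subst lq (ps_of P) m = ps_of (P \mPo lq) m.
Proof.
move=> hl; rewrite /ps_subst /ps_of; apply: (eq_mcoeff_below (N := (mdeg m).+1)) => //.
rewrite -raddfB -[X in vanishes_below X]muln1.
exact/(vanishes_below_comp hl)/trunc_ps_ofB.
Qed.

Lemma gm_opp_ps_of n q d (V : {mpoly R[n]}) :
  (0 < q)%N -> vanishes_below q V -> (d < 3 * q)%N ->
  agree_upto d (gm_opp (ps_of V)) (ps_of (gmp_opp V)).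
Proof.
move=> q_gt0 hV hd m hm; rewrite /gm_opp /ps_of raddf_sum /=.
have trunc_pow k : ((- trunc (mdeg m) (ps_of V)) ^+ k)@_m = ((- V) ^+ k)@_m.
  apply: (eq_mcoeff_below (N := (mdeg m).+1)) => //; apply: vanishes_belowXB.
  have -> : - trunc (mdeg m) (ps_of V) - - V = - (trunc (mdeg m) (ps_of V) - V) by ring.
  exact/vanishes_belowN/trunc_ps_ofB.
under eq_bigr => k _ do rewrite trunc_pow.
have high k : (mdeg m < k * q)%N -> ((- V) ^+ k)@_m = 0.
  by move=> hk; apply: (vanishes_belowX (k := k) (vanishes_belowN hV) hk).
transitivity (\sum_(1 <= k < (mdeg m).+3) ((- V) ^+ k)@_m).
  symmetry; apply: big_nat_widen0 => [|k /andP[hk _]]; first by lia.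
  by apply: high; apply: leq_trans hk (leq_pmulr _ q_gt0).
rewrite (@big_nat_widen0 _ 1 3) => [|//|k /andP[hk _]]; last first.
  by apply: high; apply: leq_trans (leq_ltn_trans hm hd) _; rewrite leq_mul2r hk orbT.
by rewrite big_ltn // big_nat1 expr1 mcoeffD sqrrN.
Qed.

Lemma delta_ps_of n q d (P : {mpoly R[n]}) :
  (0 < q)%N -> vanishes_below q P -> (d < 3 * q)%N ->
  agree_upto d (delta (ps_of P)) (ps_of (delta_poly P)).
Proof.
move=> q_gt0 hP hd; rewrite /delta /delta_poly.
have : agree_upto d (@ps_zero R n.+1) (ps_of 0) by move=> m _; rewrite /ps_of mcoeff0.
generalize (@ps_zero R n.+1) => a; generalize (0 : {mpoly R[n.+1]}) => U.
elim: (iota 0 n.+2) a U => [|k s ih] a U ha /=; first exact: ha.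
apply: ih.
have hV : vanishes_below q (P \mPo face R n k) by apply: vanishes_below_comp_face.
have hsub : agree_upto d (ps_subst (face R n k) (ps_of P)) (ps_of (P \mPo face R n k)).
  by move=> m _; apply: ps_of_subst; apply: vanishes_below_face.
move=> m hm; rewrite -gm_add_ps_of; move: m hm; case: (odd k) => /=.
  apply: (agree_upto_gm_add ha).
  exact: agree_upto_trans (agree_upto_gm_opp hsub) (gm_opp_ps_of q_gt0 hV hd).
exact: (agree_upto_gm_add ha hsub).
Qed.

Lemma delta_ps_of0 n m : delta (ps_of (0 : {mpoly R[n]})) m = 0.
Proof.
have hd : (mdeg m < 3 * (mdeg m).+1)%N by rewrite mulSn ltnS leq_addr.
have := delta_ps_of (ltn0Sn _) (@vanishes_below0 R n (mdeg m).+1) hd (leqnn (mdeg m)).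
by rewrite delta_poly0 /ps_of mcoeff0.
Qed.

Lemma gm_add_vanishing n (f g : PS R n) :
  (forall m, g m = 0) -> forall m, gm_add f g m = f m.
Proof.
move=> hg m; rewrite /gm_add /ps_add /ps_mul.
have -> : trunc (mdeg m) g = 0 by rewrite /trunc big1 // => m' _; rewrite hg scale0r.
by rewrite hg mulr0 mcoeff0 !addr0.
Qed.

Lemma agree_upto_gm_subrr n q d (f : PS R n) (Y : {mpoly R[n]}) :
  (0 < q)%N -> vanishes_below q Y -> (d < 3 * q)%N ->
  agree_upto d f (ps_of Y) -> agree_upto d (gm_sub f (ps_of Y)) (ps_of 0).
Proof.
move=> q_gt0 hY hd hf.
apply: agree_upto_trans (agree_upto_gm_sub hf (fun _ _ => erefl)) _.
apply: agree_upto_trans.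
  exact: (agree_upto_gm_add (fun _ _ => erefl) (gm_opp_ps_of q_gt0 hY hd)).
apply: agree_upto_trans (fun m _ => gm_add_ps_of _ _ m) (agree_upto_ps_of _).
have -> : gmp_add Y (gmp_opp Y) - 0 = Y ^+ 3 by rewrite /gmp_add /gmp_opp; ring.
exact: vanishes_belowW hd (vanishes_belowX (k := 3) hY).
Qed.

Lemma Zr_ps_of n r p d (P : {mpoly R[n]}) (W : {mpoly R[n.+1]}) :
  (0 < p)%N -> vanishes_below p P -> agree_upto d (delta (ps_of P)) (ps_of W) ->
  vanishes_below (p + r) W -> (p + r <= d.+1)%N -> Zr r p (ps_of P).
Proof.
move=> p_gt0 hP hdP hW hd; split; [by apply: hP; rewrite mdeg0 | split => // m hm].
by rewrite hdP; [apply: hW | lia].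
Qed.

Lemma Eeq_agree_upto n r p d (x y : PS R n.+1) :
  (0 < r)%N -> (p + r <= d.+1)%N -> agree_upto d (gm_sub x y) (ps_of 0) -> Eeq r p x y.
Proof.
move=> r_gt0 hd ha; exists (gm_sub x y), (ps_of 0); split; [|split].
- split; [|split] => [|m hm|m hm].
  + by rewrite /cochain ha ?mdeg0 // /ps_of mcoeff0.
  + by rewrite ha /ps_of ?mcoeff0 //; lia.
  + by rewrite (agree_upto_delta ha) ?delta_ps_of0 //; lia.
- by split; [|split] => [|m _|m _]; [exact: mcoeff0 | exact: mcoeff0 | exact: delta_ps_of0].
- by move=> m; rewrite gm_add_vanishing // => m'; apply: delta_ps_of0.
Qed.

End PowerSeries.

Section Characteristic2.
Variable R : comNzRingType.

Definition aiaj i j (c : R) : {mpoly R[2]} :=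
  c *: ('X_(inord 0) ^+ (2 ^ i) * 'X_(inord 1) ^+ (2 ^ j)).

Definition dr_aiaj i j (c : R) : {mpoly R[3]} :=
  c ^+ 2 *: ('X_(inord 0) ^+ (2 ^ i) * 'X_(inord 1) ^+ (2 ^ i) * 'X_(inord 2) ^+ (2 ^ j.+1)
             - 'X_(inord 0) ^+ (2 ^ i.+1) * 'X_(inord 1) ^+ (2 ^ j) * 'X_(inord 2) ^+ (2 ^ j)).

Lemma vanishes_below_aiaj i j c : vanishes_below (2 ^ i + 2 ^ j) (aiaj i j c).
Proof. by apply/vanishes_belowZ/vanishes_belowM; apply: vanishes_belowXUn. Qed.

Lemma vanishes_below_dr_aiaj i j c : vanishes_below (2 * (2 ^ i + 2 ^ j)) (dr_aiaj i j c).
Proof.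
apply/vanishes_belowZ/vanishes_belowB.
  have -> : (2 * (2 ^ i + 2 ^ j) = 2 ^ i + 2 ^ i + 2 ^ j.+1)%N by rewrite expnS; lia.
  by apply: vanishes_belowM; [apply: vanishes_belowM |]; apply: vanishes_belowXUn.
have -> : (2 * (2 ^ i + 2 ^ j) = 2 ^ i.+1 + 2 ^ j + 2 ^ j)%N by rewrite expnS; lia.
by apply: vanishes_belowM; [apply: vanishes_belowM |]; apply: vanishes_belowXUn.
Qed.

Lemma comp_mpolyXUn n k (i : 'I_n) e (lq : n.-tuple {mpoly R[k]}) :
  'X_i ^+ e \mPo lq = tnth lq i ^+ e.
Proof. by rewrite rmorphXn /= comp_mpolyXU -tnth_nth. Qed.

Lemma comp_mpolyM n k (lq : n.-tuple {mpoly R[k]}) (P Q : {mpoly R[n]}) :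
  (P * Q) \mPo lq = (P \mPo lq) * (Q \mPo lq).
Proof. exact: rmorphM. Qed.

Lemma tnth_face n k i : (i < n.+1)%N ->
  tnth (face R n.+1 k) (inord i) =
    if (i.+1 < k)%N then 'X_(inord i)
    else if i.+1 == k then 'X_(inord i) + 'X_(inord i.+1)
    else 'X_(inord i.+1).
Proof. by move=> hi; rewrite tnth_mktuple /face_var inordK. Qed.

Hypothesis pchar2 : 2 \in [pchar R].

Lemma exprD_pchar2 n (x y : {mpoly R[n]}) k : (x + y) ^+ (2 ^ k) = x ^+ (2 ^ k) + y ^+ (2 ^ k).
Proof.
have pchar2_mpoly : 2 \in [pchar {mpoly R[n]}] := rmorph_pchar (@mpolyC n R) pchar2.
by rewrite exprDn_pchar // (eq_pnat _ (pcharf_eq pchar2_mpoly)) pnatX pnat_id.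
Qed.

Lemma ga_coboundary_aiaj i j c : ga_coboundary (aiaj i j c) = 0.
Proof.
rewrite /ga_coboundary /aiaj /= !big_cons big_nil.
rewrite !comp_mpolyZ !comp_mpolyM !comp_mpolyXUn !tnth_face //= !exprD_pchar2.
by rewrite -!mul_mpolyC; ring.
Qed.

Lemma dr_aiaj_cup i j c :
  dr_aiaj i j c = (aiaj i j c \mPo face R 2 0) * (aiaj i j c \mPo face R 2 2)
                  - (aiaj i j c \mPo face R 2 1) * (aiaj i j c \mPo face R 2 3).
Proof.
rewrite /dr_aiaj /aiaj !comp_mpolyZ !comp_mpolyM !comp_mpolyXUn !tnth_face //= !exprD_pchar2.
by rewrite !expnSr !exprM -!mul_mpolyC rmorphXn; ring.
Qed.

Lemma ga_coboundary_dr_aiaj i j c : ga_coboundary (dr_aiaj i j c) = 0.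
Proof.
rewrite /ga_coboundary /dr_aiaj /= !big_cons big_nil.
rewrite !comp_mpolyZ !comp_mpolyB !comp_mpolyM !comp_mpolyXUn !tnth_face //= !exprD_pchar2.
by rewrite -!mul_mpolyC; ring.
Qed.

Lemma delta_poly_aiaj i j c :
  vanishes_below (3 * (2 ^ i + 2 ^ j)) (delta_poly (aiaj i j c) - dr_aiaj i j c).
Proof.
set q := (2 ^ i + 2 ^ j)%N; have q_gt0 : (0 < q)%N by rewrite addn_gt0 expn_gt0.
have hP := @vanishes_below_aiaj i j c; have hY := @vanishes_below_dr_aiaj i j c.
apply: (@delta_poly_unique _ 2 q _ _ q_gt0 hP (leqnn _)).
have hV k : vanishes_below q (aiaj i j c \mPo face R 2 k).
  exact: vanishes_below_comp_face.
have hcoc := @ga_coboundary_aiaj i j c; have hcup := @dr_aiaj_cup i j c.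
rewrite /ga_coboundary /= !big_cons !big_nil /= !mulr1 in hcoc *.
move: (hV 0%N) (hV 1%N) (hV 2%N) (hV 3%N) hcoc hcup.
set V0 := aiaj i j c \mPo _; set V1 := aiaj i j c \mPo _.
set V2 := aiaj i j c \mPo _; set V3 := aiaj i j c \mPo _.
move=> _ h1 _ h3 hcoc hcup.
have -> : (1 + dr_aiaj i j c) * ((1 + V1) * (1 + V3)) - (1 + V0) * (1 + V2)
    = dr_aiaj i j c * (V1 + V3 + V1 * V3) + (dr_aiaj i j c - (V0 * V2 - V1 * V3))
      - ((-1) ^+ 0 * V0 + ((-1) ^+ 1 * V1 + ((-1) ^+ 2 * V2 + ((-1) ^+ 3 * V3 + 0)))).
  by ring.
rewrite hcoc -hcup subrr subr0 addr0.
have -> : (3 * q = 2 * q + q)%N by lia.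
apply: vanishes_belowM hY _; apply: vanishes_belowD; first exact: vanishes_belowD.
by apply: vanishes_belowW (vanishes_belowM h1 h3); rewrite leq_addr.
Qed.

Lemma delta_poly_dr_aiaj i j c :
  vanishes_below (2 * (2 * (2 ^ i + 2 ^ j))) (delta_poly (dr_aiaj i j c)).
Proof.
apply: delta_poly_cocycle (@ga_coboundary_dr_aiaj i j c).
  by rewrite muln_gt0 addn_gt0 expn_gt0.
exact: vanishes_below_dr_aiaj.
Qed.

End Characteristic2.

Theorem mainTheorem5 (i j : nat) (c : 'F_2) : i <> j ->
  let p := (2 ^ i + 2 ^ j)%N in
  let r := p in
  exists x : PS 'F_2 2,
    Zr r p x /\
    agree_upto p x
      (ps_of (c *: ('X_(inord 0) ^+ (2 ^ i) * 'X_(inord 1) ^+ (2 ^ j)))) /\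
    exists y : PS 'F_2 3,
      Zr r (p + r) y /\
      agree_upto (p + r) y
        (ps_of (c ^+ 2 *:
           ('X_(inord 0) ^+ (2 ^ i) * 'X_(inord 1) ^+ (2 ^ i)
              * 'X_(inord 2) ^+ (2 ^ j.+1)
            - 'X_(inord 0) ^+ (2 ^ i.+1) * 'X_(inord 1) ^+ (2 ^ j)
              * 'X_(inord 2) ^+ (2 ^ j)))) /\
      Eeq r (p + r) (delta x) y.
Proof.
(* The computation does not need [i <> j]. *)
move=> _ p r.
have p_gt0 : (0 < p)%N by rewrite addn_gt0 expn_gt0.
have pchar2 : 2 \in [pchar 'F_2] := pchar_Fp (isT : prime 2).
have hP : vanishes_below p (aiaj i j c) := vanishes_below_aiaj c.
have hY : vanishes_below (2 * p) (dr_aiaj i j c) := vanishes_below_dr_aiaj c.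
have dx : agree_upto (3 * p).-1 (delta (ps_of (aiaj i j c))) (ps_of (dr_aiaj i j c)).
  apply: agree_upto_trans (delta_ps_of p_gt0 hP _) (agree_upto_ps_of _); first lia.
  by rewrite prednK ?muln_gt0 //; apply: delta_poly_aiaj.
have dy : agree_upto (3 * p).-1 (delta (ps_of (dr_aiaj i j c))) (ps_of 0).
  apply: agree_upto_trans (delta_ps_of (q := 2 * p) _ hY _) (agree_upto_ps_of _); try lia.
  rewrite subr0; apply: (vanishes_belowW _ (delta_poly_dr_aiaj (i := i) (j := j) pchar2 c)); lia.
exists (ps_of (aiaj i j c)); split; last split => //.
  by apply: (Zr_ps_of p_gt0 hP dx); [apply: vanishes_belowW hY | ]; lia.
exists (ps_of (dr_aiaj i j c)); split; last split => //.
  apply: (Zr_ps_of _ _ dy (@vanishes_below0 _ _ _)); try lia.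
  by apply: vanishes_belowW hY; lia.
by apply: (Eeq_agree_upto _ _ (agree_upto_gm_subrr _ hY _ dx)); lia.
Qed.
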